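(* Let $G$ be a subgroup of the symmetric group $\mathcal{S}_{N}$ and $\chi$ an irreducible character of $G$, and define for $N\times N$ real matrices $A=(a_{ij})$ the immanant $d_{\chi}^{G}(A)=\sum_{\sigma\in G}\chi(\sigma)\prod_{i=1}^{N}a_{i\,\sigma(i)}$. If $A,B,C,X$ are $N\times N$ real symmetric positive semidefinite matrices, then \[ d_{\chi}^{G}(A+X)+d_{\chi}^{G}(B+X)+d_{\chi}^{G}(C+X)+d_{\chi}^{G}(A+B+C+X)\geq d_{\chi}^{G}(A+B+X)+d_{\chi}^{G}(B+C+X)+d_{\chi}^{G}(C+A+X)+d_{\chi}^{G}(X). \] *)

From HB Require Import structures.
From mathcomp Require Import all_boot all_order all_algebra all_fingroup.
From mathcomp Require Import mxrepresentation.
From mathcomp Require Import reals.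
From mathcomp Require Import complex.
Set Implicit Arguments. Unset Strict Implicit. Unset Printing Implicit Defensive.
Import Order.TTheory GRing.Theory Num.Theory.
Local Open Scope ring_scope.
Local Open Scope complex_scope.

Definition irr_character (R : realType) (N : nat) (G : {group 'S_N})
    (chi : 'S_N -> R[i]) : Prop :=
  exists (n : nat) (rG : mx_representation R[i] G n),
    mx_irreducible rG /\ forall g, g \in G -> chi g = \tr (rG g).

Definition immanant (R : realType) (N : nat) (G : {group 'S_N})
    (chi : 'S_N -> R[i]) (A : 'M[R]_N) : R[i] :=
  \sum_(s in G) chi s * \prod_(i < N) ((A i (s i))%:C).

Definition psd (R : realType) (N : nat) (A : 'M[R]_N) : Prop :=
  A^T = A /\ forall x : 'cV[R]_N, 0 <= (x^T *m A *m x) 0 0.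

(* Expanding each product prod_i y_{i,s(i)} of Y = X + a A + b B + c C by the
   summand each factor comes from, a colouring f of the rows by X, A, B, C gets
   the weight a^(#A-rows) b^(#B-rows) c^(#C-rows).  The alternating sum of the
   eight products is the third finite difference at 0 in (a, b, c), so it keeps
   exactly the colourings using each of A, B and C, all with weight 1.  Writing
   each positive semidefinite matrix as a Gram matrix turns the resulting
   colouring sum phi into a positive definite function on the symmetric group,
   phi (a b^-1) = sum_j u_j(a) conj(u_j(b)).  For any representation rho of G,
   every eigenvalue of sum_g phi(g) rho(g) is then nonnegative, hence so is its
   trace sum_g chi(g) phi(g). *)
From HB Require Import structures.
From mathcomp Require Import all_boot all_order all_algebra all_fingroup.
From mathcomp Require Import mxrepresentation reals complex.
From mathcomp Require Import mxred spectral ring.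
Set Implicit Arguments. Unset Strict Implicit. Unset Printing Implicit Defensive.
Import Order.TTheory GRing.Theory Num.Theory.
Local Open Scope ring_scope.

Lemma mxtrace_ge0 (C : numClosedFieldType) n (T : 'M[C]_n) :
  (forall l, eigenvalue T l -> 0 <= l) -> 0 <= \tr T.
Proof.
move=> eigen_ge0; case: n => [|n] in T eigen_ge0 *.
  by rewrite /mxtrace big_ord0.
have [P P_unitary U_trig] := Schur T (ltn0Sn n).
have P_unit := unitarymx_unit P_unitary.
set U := conjmx P T in U_trig.
have -> : \tr T = \tr U.
  by rewrite /U conjumx // mxtrace_mulC mulmxA mulVmx ?mul1mx.
rewrite /mxtrace sumr_ge0 // => i _; apply: eigen_ge0.
have : eigenvalue U (U i i).
  rewrite eigenvalue_root_char char_poly_trig // rootE horner_prod.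
  by apply/prodf_eq0; exists i => //; rewrite hornerXsubC subrr.
by apply: (eigenvalue_conjmx (stablemx_unit T P_unit)); rewrite row_free_unit.
Qed.

Lemma hermitian_gram (C : numClosedFieldType) n (M : 'M[C]_n) :
    (forall p q, M q p = (M p q)^*) ->
    (forall z : 'I_n -> C, 0 <= \sum_p \sum_q z p * M p q * (z q)^*) ->
  exists V : 'M[C]_n, forall p q, M p q = \sum_r V r p * (V r q)^*.
Proof.
move=> M_herm M_form.
have M_adj : map_mx Num.conj M^T = M.
  by apply/matrixP => p q; rewrite !mxE M_herm conjCK.
have /orthomx_spectralP : M \is normalmx by apply/normalmxP; rewrite M_adj.
set P := spectralmx M; set d := spectral_diag M => M_diag.
have P_unitary : P \is unitarymx by exact: spectral_unitarymx.
rewrite invmx_unitary // in M_diag.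
have PPadj : P *m map_mx Num.conj P^T = 1%:M by apply/unitarymxP.
have d_ge0 r : 0 <= d 0 r.
  have -> : d 0 r = (P *m M *m map_mx Num.conj P^T) r r.
    by rewrite M_diag !mulmxA PPadj mul1mx -!mulmxA PPadj mulmx1 mxE eqxx mulr1n.
  suff -> : (P *m M *m map_mx Num.conj P^T) r r =
      \sum_p \sum_q P r p * M p q * (P r q)^* by exact: M_form.
  rewrite mxE exchange_big /=; apply: eq_bigr => q _.
  by rewrite !mxE mulr_suml.
exists (\matrix_(r, p) (sqrtC (d 0 r) * (P r p)^*)) => p q.
rewrite M_diag mul_mx_diag !mxE; apply: eq_bigr => r _.
have sqrt_real : (sqrtC (d 0 r))^* = sqrtC (d 0 r).
  by rewrite geC0_conj ?sqrtC_ge0.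
rewrite !mxE rmorphM /= conjCK sqrt_real -{1}[d 0 r]sqrtCK; ring.
Qed.

Section RealPsd.
Variables (R : realType) (N : nat) (M : 'M[R]_N).
Hypothesis M_psd : psd M.
Local Notation toC := (real_complex R).

Lemma conj_toC (a : R) : (toC a)^* = toC a.
Proof. exact: conjc_real. Qed.

Lemma psd_sym p q : M q p = M p q.
Proof. by rewrite -[in LHS]M_psd.1 mxE. Qed.

Lemma psd_qform_ge0 (v : 'I_N -> R) : 0 <= \sum_p \sum_q v p * M p q * v q.
Proof.
suff -> : \sum_p \sum_q v p * M p q * v q =
    ((\col_p v p)^T *m M *m \col_p v p) 0 0 by exact: M_psd.2.
rewrite mxE exchange_big /=; apply: eq_bigr => q _.
by rewrite !mxE mulr_suml; apply: eq_bigr => p _; rewrite !mxE.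
Qed.

Lemma psd_complex_qform_ge0 (z : 'I_N -> R[i]) :
  0 <= \sum_p \sum_q z p * toC (M p q) * (z q)^*.
Proof.
pose x p := complex.Re (z p); pose y p := complex.Im (z p).
have i2 : 'i * 'i = -1 :> R[i] by rewrite -expr2 sqrCi.
have zE p : z p = toC (x p) + 'i * toC (y p) by exact: complexE.
have -> : \sum_p \sum_q z p * toC (M p q) * (z q)^* =
    toC (\sum_p \sum_q (x p * M p q * x q + y p * M p q * y q))
    + 'i * toC (\sum_p \sum_q (y p * M p q * x q - x p * M p q * y q)).
  rewrite !rmorph_sum mulr_sumr -big_split; apply: eq_bigr => p _.
  rewrite !rmorph_sum mulr_sumr -big_split; apply: eq_bigr => q _ /=.
  rewrite [z p]zE [z q]zE rmorphD rmorphM /= conjCi !conj_toC.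
  rewrite !(rmorphD, rmorphB, rmorphM) /=; ring: i2.
have -> : \sum_p \sum_q (y p * M p q * x q - x p * M p q * y q) = 0.
  rewrite (eq_bigr _ (fun p _ => sumrB _ _ _ _)) sumrB.
  apply/eqP; rewrite subr_eq0.
  rewrite exchange_big /=; apply/eqP/eq_bigr => p _; apply: eq_bigr => q _.
  by rewrite psd_sym; ring.
rewrite rmorph0 mulr0 addr0 ler0c.
rewrite (eq_bigr _ (fun p _ => big_split _ _ _ _ _)) big_split /=.
by rewrite addr_ge0 ?psd_qform_ge0.
Qed.

Lemma psd_gram : exists V : 'M[R[i]]_N,
  forall p q, toC (M p q) = \sum_r V r p * (V r q)^*.
Proof.
have [p q|z|V MV] := hermitian_gram (M := map_mx toC M).
- by rewrite !mxE conj_toC psd_sym.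
- under eq_bigr do under eq_bigr do rewrite mxE.
  exact: psd_complex_qform_ge0.
- by exists V => p q; rewrite -MV mxE.
Qed.

End RealPsd.

Section PositiveDefiniteFunctions.
Variables (C : numClosedFieldType) (gT : finGroupType) (G : {group gT}).

Definition posdef_fun (phi : gT -> C) :=
  forall c : gT -> C,
    0 <= \sum_(a in G) \sum_(b in G) c a * (c b)^* * phi (a * b^-1)%g.

Lemma posdef_gram (J : finType) (w : J -> C) (u : J -> gT -> C) (phi : gT -> C) :
    (forall j, 0 <= w j) ->
    {in G &, forall a b, phi (a * b^-1)%g = \sum_j w j * u j a * (u j b)^*} ->
  posdef_fun phi.
Proof.
move=> w_ge0 phiE c.
have -> : \sum_(a in G) \sum_(b in G) c a * (c b)^* * phi (a * b^-1)%g =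
    \sum_j w j * (\sum_(a in G) c a * u j a) * (\sum_(b in G) c b * u j b)^*.
  under eq_bigr => a aG do under eq_bigr => b bG do
    rewrite phiE // mulr_sumr.
  under eq_bigr => a _ do rewrite exchange_big /=.
  rewrite exchange_big /=; apply: eq_bigr => j _.
  rewrite rmorph_sum mulr_sumr exchange_big /=; apply: eq_bigr => b _.
  rewrite mulr_sumr mulr_suml; apply: eq_bigr => a _.
  by rewrite rmorphM /=; ring.
by apply: sumr_ge0 => j _; rewrite -mulrA mulr_ge0 ?mul_conjC_ge0.
Qed.

Variables (n : nat) (rG : mx_representation C G n) (phi : gT -> C).
Hypothesis phi_posdef : posdef_fun phi.

Let T := \sum_(g in G) phi g *: rG g.

Lemma posdef_eigenvalue_ge0 (l : C) (v : 'rV[C]_n) :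
  v != 0 -> v *m T = l *: v -> 0 <= l.
Proof.
move=> v_neq0 vT.
pose S := \sum_(b in G) \sum_k (v *m rG b) 0 k * ((v *m rG b) 0 k)^*.
have S_gt0 : 0 < S.
  rewrite /S (bigD1 1%g) ?group1 //= repr_mx1 mulmx1 ltr_wpDr //.
    by apply: sumr_ge0 => b _; apply: sumr_ge0 => k _; rewrite mul_conjC_ge0.
  suff -> : \sum_k v 0 k * (v 0 k)^* = dotmx v v by exact: dotmx_is_dotmx.
  by rewrite dotmxE mxE; apply: eq_bigr => k _; rewrite !mxE.
have vTrG b : b \in G ->
    v *m T *m rG b = \sum_(a in G) phi (a * b^-1)%g *: (v *m rG a).
  move=> bG; rewrite mulmx_sumr mulmx_suml (reindex_inj (mulIg b^-1)%g) /=.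
  apply: eq_big => [a|a aG]; first by rewrite groupMr ?groupV.
  by rewrite -scalemxAr -scalemxAl -mulmxA -repr_mxM ?mulgKV // groupMr ?groupV.
have : 0 <= l * S.
  have -> : l * S = \sum_k \sum_(a in G) \sum_(b in G)
      (v *m rG a) 0 k * ((v *m rG b) 0 k)^* * phi (a * b^-1)%g.
    transitivity (\sum_(b in G) \sum_k (v *m T *m rG b) 0 k * ((v *m rG b) 0 k)^*).
      rewrite /S mulr_sumr; apply: eq_bigr => b _; rewrite mulr_sumr.
      by apply: eq_bigr => k _; rewrite vT -scalemxAl [in RHS]mxE mulrA.
    rewrite exchange_big /=; apply: eq_bigr => k _.
    rewrite [RHS]exchange_big /=; apply: eq_bigr => b bG.
    rewrite vTrG // summxE mulr_suml; apply: eq_bigr => a _.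
    by rewrite mxE; ring.
  by apply: sumr_ge0 => k _; apply: phi_posdef.
by rewrite pmulr_lge0.
Qed.

Lemma posdef_trace_ge0 : 0 <= \sum_(g in G) \tr (rG g) * phi g.
Proof.
have -> : \sum_(g in G) \tr (rG g) * phi g = \tr T.
  by rewrite /T raddf_sum; apply: eq_bigr => g _; rewrite /= mxtraceZ mulrC.
apply: mxtrace_ge0 => l /eigenvalueP[v vT v_neq0].
exact: posdef_eigenvalue_ge0 v_neq0 vT.
Qed.

End PositiveDefiniteFunctions.

Section Colourings.
Variables (N : nat) (K : finType).

Definition colouring_sum (S : comPzRingType) (c : {ffun 'I_N -> K} -> S)
    (M : K -> 'M[S]_N) (s : 'S_N) : S :=
  \sum_f c f * \prod_i M (f i) i (s i).

Definition colour_count (f : {ffun 'I_N -> K}) (k : K) : nat :=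
  #|[pred i | f i == k]|.

Lemma colour_count_perm (f : {ffun 'I_N -> K}) (s : 'S_N) k :
  colour_count [ffun i => f (s i)] k = colour_count f k.
Proof.
rewrite /colour_count -!sum1_card (reindex_inj (@perm_inj _ s^-1)) /=.
by apply: eq_bigl => i; rewrite !inE ffunE permKV.
Qed.

Lemma prod_colour_count (S : comPzRingType) (w : K -> S) (f : {ffun 'I_N -> K}) :
  \prod_i w (f i) = \prod_k w k ^+ colour_count f k.
Proof.
rewrite (partition_big f predT) //; apply: eq_bigr => k _.
by rewrite -prodr_const; apply: eq_bigr => i /eqP ->.
Qed.

Lemma prod_sum_colouring (S : comPzRingType) (w : K -> S) (M : K -> 'M[S]_N)
    (s : 'S_N) :
  \prod_i \sum_k w k * M k i (s i) =
    colouring_sum (fun f => \prod_k w k ^+ colour_count f k) M s.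
Proof.
rewrite bigA_distr_bigA; apply: eq_bigr => f _.
by rewrite big_split prod_colour_count.
Qed.

Variables (C : numClosedFieldType) (M V : K -> 'M[C]_N).
Hypothesis M_gram : forall k p q, M k p q = \sum_r V k r p * (V k r q)^*.
Variable c : {ffun 'I_N -> K} -> C.
Hypothesis c_ge0 : forall f, 0 <= c f.
Hypothesis c_perm :
  forall (f : {ffun 'I_N -> K}) (s : 'S_N), c [ffun i => f (s i)] = c f.

Let U (a : 'S_N) (f : {ffun 'I_N -> K}) (r : {ffun 'I_N -> 'I_N}) :=
  \prod_l V (f l) (r l) (a^-1 l)%g.

Lemma colouring_sum_gram (a b : 'S_N) :
  colouring_sum c M (a * b^-1)%g = \sum_f \sum_r c f * U a f r * (U b f r)^*.
Proof.
have f_perm_inj : injective (fun f : {ffun 'I_N -> K} => [ffun i => f (a i)]).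
  move=> f1 f2 /ffunP f12; apply/ffunP => l.
  by have := f12 (a^-1 l)%g; rewrite !ffunE permKV.
rewrite /colouring_sum (reindex_inj f_perm_inj) /=; apply: eq_bigr => f _.
under [RHS]eq_bigr do rewrite -mulrA.
rewrite c_perm -mulr_sumr (reindex_inj (@perm_inj _ a^-1)%g) /=; congr (_ * _).
under eq_bigr => l _ do rewrite ffunE permM !permKV M_gram.
rewrite bigA_distr_bigA; apply: eq_bigr => r _.
by rewrite big_split /= rmorph_prod.
Qed.

Lemma posdef_colouring_sum (G : {group 'S_N}) : posdef_fun G (colouring_sum c M).
Proof.
apply: (posdef_gram (w := fun fr => c fr.1) (u := fun fr a => U a fr.1 fr.2)).
  by move=> fr; apply: c_ge0.
by move=> a b _ _; rewrite colouring_sum_gram pair_big.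
Qed.

End Colourings.

Section AlternatingSum.
Variables (R : realType) (N : nat) (A B C X : 'M[R]_N).
Local Notation toC := (real_complex R).

Definition colour_mx (k : 'I_4) : 'M[R[i]]_N :=
  map_mx toC (tnth [tuple X; A; B; C] k).

Definition colour_weight (ta tb tc : R[i]) (f : {ffun 'I_N -> 'I_4}) : R[i] :=
  \prod_k tnth [tuple 1; ta; tb; tc] k ^+ colour_count f k.

Lemma prod_colour_expand (ta tb tc : R[i]) (Y : 'M[R]_N) (s : 'S_N) :
    (forall i j, toC (Y i j) =
       toC (X i j) + ta * toC (A i j) + tb * toC (B i j) + tc * toC (C i j)) ->
  \prod_i toC (Y i (s i)) = colouring_sum (colour_weight ta tb tc) colour_mx s.
Proof.
move=> YE; rewrite -prod_sum_colouring; apply: eq_bigr => i _.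
rewrite YE !big_ord_recl big_ord0 !mxE !(tnth_nth ta) !(tnth_nth X) /=; ring.
Qed.

Definition uses_all_colours (f : {ffun 'I_N -> 'I_4}) : R[i] :=
  \prod_(k < 3) (0 < colour_count f (lift ord0 k))%:R.

Lemma alternating_prod_colouring (s : 'S_N) :
  let P Y := \prod_i toC (Y i (s i)) in
  P (A + X) + P (B + X) + P (C + X) + P (A + B + C + X)
    - (P (A + B + X) + P (B + C + X) + P (C + A + X) + P X)
  = colouring_sum uses_all_colours colour_mx s.
Proof.
move=> P; have expand ta tb tc Y := @prod_colour_expand ta tb tc Y s.
(* [?]: each rule also runs on the side goals left by the previous ones. *)
rewrite /P /= ?(expand 1 0 0 (A + X)) ?(expand 0 1 0 (B + X))
  ?(expand 0 0 1 (C + X)) ?(expand 1 1 1 (A + B + C + X))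
  ?(expand 1 1 0 (A + B + X)) ?(expand 0 1 1 (B + C + X))
  ?(expand 1 0 1 (C + A + X)) ?(expand 0 0 0 X);
  try by move=> i j; rewrite ?mxE ?rmorphD /=; ring.
rewrite /colouring_sum -!big_split -sumrB /=; apply: eq_bigr => f _.
have used n : (0 < n)%:R = 1 - 0 ^+ n :> R[i].
  by rewrite expr0n lt0n; case: (n == 0); rewrite ?subrr ?subr0.
rewrite /colour_weight /uses_all_colours !big_ord_recl !big_ord0 !(tnth_nth 0) /=.
by rewrite !expr1n !used; ring.
Qed.

Lemma uses_all_colours_ge0 f : 0 <= uses_all_colours f.
Proof. by apply: prodr_ge0 => k _; rewrite ler0n. Qed.

Lemma uses_all_colours_perm (f : {ffun 'I_N -> 'I_4}) (s : 'S_N) :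
  uses_all_colours [ffun i => f (s i)] = uses_all_colours f.
Proof. by apply: eq_bigr => k _; rewrite colour_count_perm. Qed.

Lemma colour_mx_gram : psd A -> psd B -> psd C -> psd X ->
  exists V : 'I_4 -> 'M[R[i]]_N,
    forall k p q, colour_mx k p q = \sum_r V k r p * (V k r q)^*.
Proof.
move=> psdA psdB psdC psdX.
have gram k : exists V : 'M[R[i]]_N,
    forall p q, colour_mx k p q = \sum_r V r p * (V r q)^*.
  have [|V VE] := @psd_gram _ _ (tnth [tuple X; A; B; C] k).
    by case: k => [[|[|[|[|?]]]] ?]; rewrite (tnth_nth X).
  by exists V => p q; rewrite mxE VE.
exact: fin_all_exists gram.
Qed.

End AlternatingSum.

Theorem theorem5p7 (R : realType) (N : nat) (G : {group 'S_N})
    (chi : 'S_N -> R[i]) (A B C X : 'M[R]_N) :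
  irr_character G chi ->
  psd A -> psd B -> psd C -> psd X ->
  immanant G chi (A + B + X) + immanant G chi (B + C + X)
    + immanant G chi (C + A + X) + immanant G chi X
  <= immanant G chi (A + X) + immanant G chi (B + X)
    + immanant G chi (C + X) + immanant G chi (A + B + C + X).
Proof.
move=> [n [rG [_ chiE]]] psdA psdB psdC psdX.
have [V colour_gram] := colour_mx_gram psdA psdB psdC psdX.
rewrite -subr_ge0 /immanant -!big_split -sumrB /=.
under eq_bigr => s sG do rewrite chiE // -!mulrDr -mulrBr alternating_prod_colouring.
apply/posdef_trace_ge0/posdef_colouring_sum => //.
- exact: uses_all_colours_ge0.
- exact: uses_all_colours_perm.
Qed.
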